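(* Let $\alpha_1,\beta_1,\alpha_2,\beta_2\in(0,1)$ with $\lambda_i:=1-\alpha_i-\beta_i\le 0$ for $i=1,2$. Let $w_1,w_2\ge 0$, $\Gamma_1,\Gamma_2\in(0,1]$, and MPR success probabilities $p_{1/1},p_{2/2},p_{1/1,2},p_{2/2,1}\in[0,1]$. For policies $\mathbf a_k=(a_{k,0},a_{k,1},a_{k,2})$, $k=1,2$, define $$E(\mathbf a_1,\mathbf a_2)=w_1E_1\big(q_1(\mathbf a_1,\mathbf a_2)\big)+w_2E_2\big(q_2(\mathbf a_1,\mathbf a_2)\big).$$ Then the minimum of $E$ over $\mathcal F_\Gamma=\mathcal P_1(\Gamma_1)\times\mathcal P_2(\Gamma_2)$ exists and at least one global minimizer is a pair of vertices, i.e. $$\min_{(\mathbf a_1,\mathbf a_2)\in\mathcal F_\Gamma}E(\mathbf a_1,\mathbf a_2)=\min_{\mathbf v_1\in\mathcal V_1,\ \mathbf v_2\in\mathcal V_2}E(\mathbf v_1,\mathbf v_2),$$ where $\mathcal V_k=\{(1,0,0),\,(1-\Gamma_k,\Gamma_k,0),\,(1-\Gamma_k,0,\Gamma_k)\}$. In particular, a global optimum is found among nine candidate policy pairs.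
   Context: For $i\in\{1,2\}$ and $q\in[0,1]$, the (steady-state reconstruction error) function is $$E_i(q)=\frac{2\alpha_i\beta_i(1-q)}{(\alpha_i+\beta_i)\big[(\alpha_i+\beta_i)-q(\alpha_i+\beta_i-1)\big]}=\frac{2\alpha_i\beta_i(1-q)}{(1-\lambda_i)(1-\lambda_i(1-q))}.$$ The effective update probabilities are, for $i\in\{1,2\}$ and $j$ the other index ($j=1+(i\bmod 2)$), $$q_i(\mathbf a_1,\mathbf a_2)=a_{1,i}a_{2,0}\,p_{1/1}+a_{1,0}a_{2,i}\,p_{2/2}+a_{1,i}a_{2,i}\big[1-(1-p_{1/1,2})(1-p_{2/2,1})\big]+a_{1,i}a_{2,j}\,p_{1/1,2}+a_{1,j}a_{2,i}\,p_{2/2,1}.$$ The feasible policy set of sensor $k$ is $\mathcal P_k(\Gamma_k)=\{\mathbf a_k\in\mathbb R_{\ge0}^3:\ a_{k,0}+a_{k,1}+a_{k,2}=1,\ a_{k,1}+a_{k,2}\le\Gamma_k\}$ (here $a_{k,0}$ is the probability of staying silent and $a_{k,i}$ the probability of sampling and transmitting source $i$ in a slot). *)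

From HB Require Import structures.
From mathcomp Require Import all_boot all_order all_algebra.
From mathcomp Require Import reals.
Set Implicit Arguments. Unset Strict Implicit. Unset Printing Implicit Defensive.
Import Order.TTheory GRing.Theory Num.Theory.
Local Open Scope ring_scope.

Section Defs.
Variable R : realType.

(* A (randomized) policy of a sensor: a0 = stay silent, a1 / a2 = sample and
   transmit source 1 / source 2. *)
Record policy := Pol { pa0 : R; pa1 : R; pa2 : R }.

Definition acomp (a : policy) (i : nat) : R :=
  match i with 0 => pa0 a | 1 => pa1 a | _ => pa2 a end.

Definition Err (al be q : R) : R :=
  2 * al * be * (1 - q) / ((al + be) * ((al + be) - q * (al + be - 1))).

Definition qeff (p11 p22 p112 p221 : R) (i : nat) (a1 a2 : policy) : R :=
  let j := (3 - i)%N in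
  acomp a1 i * acomp a2 0 * p11
  + acomp a1 0 * acomp a2 i * p22
  + acomp a1 i * acomp a2 i * (1 - (1 - p112) * (1 - p221))
  + acomp a1 i * acomp a2 j * p112
  + acomp a1 j * acomp a2 i * p221.

Definition feasible (G : R) (a : policy) : Prop :=
  0 <= pa0 a /\ 0 <= pa1 a /\ 0 <= pa2 a /\
  pa0 a + pa1 a + pa2 a = 1 /\ pa1 a + pa2 a <= G.

Definition vertex (G : R) (v : policy) : Prop :=
  v = Pol 1 0 0 \/ v = Pol (1 - G) G 0 \/ v = Pol (1 - G) 0 G.

Definition Eobj (al1 be1 al2 be2 w1 w2 p11 p22 p112 p221 : R)
  (a1 a2 : policy) : R :=
  w1 * Err al1 be1 (qeff p11 p22 p112 p221 1 a1 a2)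
  + w2 * Err al2 be2 (qeff p11 p22 p112 p221 2 a1 a2).

End Defs.

From HB Require Import structures.
From mathcomp Require Import all_boot all_order all_algebra.
From mathcomp Require Import reals.
From mathcomp.algebra_tactics Require Import ring lra.
Import Order.TTheory GRing.Theory Num.Theory.
Local Open Scope ring_scope.

(* Since alpha_i + beta_i >= 1, each E_i is concave on [0, 1]: it lies below
   all its tangents.  The update probabilities q_1, q_2 are bilinear in the two
   policies, so with one policy fixed the objective is a concave function of
   the other one, which ranges over the triangle spanned by the three vertices.
   Writing a feasible policy as a convex combination of the vertices and
   averaging the tangent bound shows that some vertex does at least as well.
   Replacing first a_1 and then a_2 by a vertex never increases E, so the best
   of the nine vertex pairs is a global minimiser. *)

Lemma convex_comb_ge_min (R : realDomainType) n (m e : 'I_n.+1 -> R) :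
  (forall k, 0 <= m k) -> \sum_k m k = 1 ->
  exists k, e k <= \sum_k m k * e k.
Proof.
move=> m_ge0 m_sum1.
case: (arg_minP e (isT : predT ord0)) => k _ k_min.
exists k; rewrite -[e k]mul1r -m_sum1 mulr_suml.
by apply: ler_sum => i _; apply: ler_wpM2l; [exact: m_ge0 | exact: k_min].
Qed.

Lemma Err_le_tangent {R : realType} {al be q x : R} :
  0 < al -> 0 < be -> 1 <= al + be -> 0 <= q <= 1 -> 0 <= x <= 1 ->
  Err al be x <= Err al be q
    - 2 * al * be / ((al + be) * (al + be - q * (al + be - 1)) ^+ 2) * (x - q).
Proof.
move=> al_gt0 be_gt0 s_ge1 /andP[q_ge0 q_le1] /andP[x_ge0 x_le1].
have dq_gt0 : 0 < al + be - q * (al + be - 1) by nra.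
have dx_gt0 : 0 < al + be - x * (al + be - 1) by nra.
(* The gap to the tangent is a multiple of (x - q)^2 with the sign of 1 - al - be. *)
have -> : Err al be x = Err al be q
    - 2 * al * be / ((al + be) * (al + be - q * (al + be - 1)) ^+ 2) * (x - q)
    - 2 * al * be * (al + be - 1) * (x - q) ^+ 2
      / ((al + be) * (al + be - x * (al + be - 1))
         * (al + be - q * (al + be - 1)) ^+ 2).
  rewrite /Err; field.
  by apply/and3P; split; apply: lt0r_neq0; lra.
rewrite gerBl divr_ge0 //.
- by rewrite mulr_ge0 ?sqr_ge0 // !mulr_ge0 //; lra.
- by rewrite mulr_ge0 ?sqr_ge0 // mulr_ge0 //; lra.
Qed.

Section Policies.
Context {R : realType}.
Implicit Types (a c v : policy R) (G : R).

Definition lin c a : R := pa0 c * pa0 a + pa1 c * pa1 a + pa2 c * pa2 a.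

Definition distribution a : Prop :=
  [/\ 0 <= pa0 a, 0 <= pa1 a, 0 <= pa2 a & pa0 a + pa1 a + pa2 a = 1].

Definition unit_coeffs c : Prop :=
  [/\ 0 <= pa0 c <= 1, 0 <= pa1 c <= 1 & 0 <= pa2 c <= 1].

Lemma lin_unit_coeffs_bounds {c a} :
  unit_coeffs c -> distribution a -> 0 <= lin c a <= 1.
Proof.
case=> /andP[? ?] /andP[? ?] /andP[? ?] [? ? ? ?].
by apply/andP; split; rewrite /lin; nra.
Qed.

Lemma feasible_distribution {G a} : feasible G a -> distribution a.
Proof. by case=> ? [? [? [? _]]]; split. Qed.

Definition vert G (k : 'I_3) : policy R :=
  match val k with
  | 0 => Pol 1 0 0
  | 1 => Pol (1 - G) G 0
  | _ => Pol (1 - G) 0 G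
  end.

Lemma vert_vertex G k : vertex G (vert G k).
Proof. by case: k => [[|[|[|k]]] hk] //=; [left | right; left | right; right]. Qed.

Lemma vert_distribution {G} k : 0 <= G <= 1 -> distribution (vert G k).
Proof. by case: k => [[|[|[|k]]] hk] //= /andP[? ?]; split=> //=; lra. Qed.

(* Barycentric coordinates of a feasible policy in the triangle of vertices. *)
Definition vert_weight G a (k : 'I_3) : R :=
  match val k with
  | 0 => 1 - (pa1 a + pa2 a) / G
  | 1 => pa1 a / G
  | _ => pa2 a / G
  end.

Lemma vert_weight_ge0 G a k : 0 < G -> feasible G a -> 0 <= vert_weight G a k.
Proof.
move=> G_gt0 [? [? [? [_ aG]]]].
case: k => [[|[|[|k]]] hk]; rewrite /vert_weight /=; try exact: divr_ge0 (ltW G_gt0).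
by rewrite subr_ge0 ler_pdivrMr // mul1r.
Qed.

Lemma sum_vert_weight G a : \sum_k vert_weight G a k = 1.
Proof. by rewrite !big_ord_recr big_ord0 /= /vert_weight /=; ring. Qed.

Lemma lin_vert_comb G c a : 0 < G -> feasible G a ->
  lin c a = \sum_k vert_weight G a k * lin c (vert G k).
Proof.
move=> G_gt0 [_ [_ [_ [a_sum _]]]].
rewrite !big_ord_recr big_ord0 /= /vert_weight /vert /lin /=.
have -> : pa0 a = 1 - pa1 a - pa2 a by lra.
by field; apply: lt0r_neq0.
Qed.

Lemma vert_le_of_affine_majorant (phi : policy R -> R) c G a :
  0 < G -> feasible G a ->
  (forall k, phi (vert G k) <= phi a - lin c a + lin c (vert G k)) ->
  exists k, phi (vert G k) <= phi a.
Proof.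
move=> G_gt0 Fa majorant.
have [k le_k] := @convex_comb_ge_min _ _ _ (fun k => phi (vert G k))
  (fun k => vert_weight_ge0 _ _ k G_gt0 Fa) (sum_vert_weight G a).
exists k; apply: (le_trans le_k).
have : \sum_k vert_weight G a k * phi (vert G k)
    <= \sum_k vert_weight G a k * (phi a - lin c a + lin c (vert G k)).
  by apply: ler_sum => i _; apply: ler_wpM2l; [exact: vert_weight_ge0 | exact: majorant].
under [X in _ <= X -> _]eq_bigr do rewrite mulrDr.
by rewrite big_split /= -mulr_suml sum_vert_weight mul1r -lin_vert_comb // subrK.
Qed.

End Policies.

Section Objective.
Context {R : realType} {al1 be1 al2 be2 w1 w2 p11 p22 p112 p221 : R}.
Hypotheses (al1_gt0 : 0 < al1) (be1_gt0 : 0 < be1) (s1_ge1 : 1 <= al1 + be1).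
Hypotheses (al2_gt0 : 0 < al2) (be2_gt0 : 0 < be2) (s2_ge1 : 1 <= al2 + be2).
Hypotheses (w1_ge0 : 0 <= w1) (w2_ge0 : 0 <= w2).
Hypotheses (p11_01 : 0 <= p11 <= 1) (p22_01 : 0 <= p22 <= 1).
Hypotheses (p112_01 : 0 <= p112 <= 1) (p221_01 : 0 <= p221 <= 1).

Local Notation q := (qeff p11 p22 p112 p221).
Local Notation E := (Eobj al1 be1 al2 be2 w1 w2 p11 p22 p112 p221).

Lemma qeff_bilinear i : (i = 1 \/ i = 2)%N ->
  exists M0 M1 M2 : policy R,
    [/\ unit_coeffs M0, unit_coeffs M1, unit_coeffs M2 &
      forall a1 a2, q i a1 a2 = lin (Pol (lin M0 a2) (lin M1 a2) (lin M2 a2)) a1].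
Proof.
set r := 1 - (1 - p112) * (1 - p221).
have r_01 : 0 <= r <= 1.
  by move: p112_01 p221_01 => /andP[? ?] /andP[? ?]; rewrite /r; apply/andP; split; nra.
have zero_01 : 0 <= (0 : R) <= 1 by rewrite lexx /= ler01.
case=> ->.
- exists (Pol 0 p22 0), (Pol p11 r p112), (Pol 0 p221 0).
  by split; try split; rewrite //= => a1 a2; rewrite /qeff /lin /r /=; ring.
- exists (Pol 0 0 p22), (Pol 0 0 p221), (Pol p11 p112 r).
  by split; try split; rewrite //= => a1 a2; rewrite /qeff /lin /r /=; ring.
Qed.

Lemma Eobj_vert_le_l G a1 a2 : 0 < G <= 1 -> feasible G a1 -> distribution a2 ->
  exists k, E (vert G k) a2 <= E a1 a2.
Proof.
move=> /andP[G_gt0 G_le1] Fa1 Da2.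
have [M0 [M1 [M2 [U0 U1 U2 q1E]]]] := qeff_bilinear 1 (or_introl erefl).
have [N0 [N1 [N2 [V0 V1 V2 q2E]]]] := qeff_bilinear 2 (or_intror erefl).
set c1 := Pol (lin M0 a2) (lin M1 a2) (lin M2 a2).
set c2 := Pol (lin N0 a2) (lin N1 a2) (lin N2 a2).
have c1_01 : unit_coeffs c1 by split; apply: lin_unit_coeffs_bounds.
have c2_01 : unit_coeffs c2 by split; apply: lin_unit_coeffs_bounds.
have Da1 := feasible_distribution Fa1.
set x1 := lin c1 a1; set x2 := lin c2 a1.
set D1 := 2 * al1 * be1 / ((al1 + be1) * (al1 + be1 - x1 * (al1 + be1 - 1)) ^+ 2).
set D2 := 2 * al2 * be2 / ((al2 + be2) * (al2 + be2 - x2 * (al2 + be2 - 1)) ^+ 2).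
pose c := Pol (- (w1 * D1 * pa0 c1 + w2 * D2 * pa0 c2))
  (- (w1 * D1 * pa1 c1 + w2 * D2 * pa1 c2)) (- (w1 * D1 * pa2 c1 + w2 * D2 * pa2 c2)).
apply: (@vert_le_of_affine_majorant _ (fun b => E b a2) c _ _ G_gt0 Fa1) => k /=.
have Dv : distribution (vert G k) by apply: vert_distribution; rewrite (ltW G_gt0).
have t1 := Err_le_tangent al1_gt0 be1_gt0 s1_ge1
  (lin_unit_coeffs_bounds c1_01 Da1) (lin_unit_coeffs_bounds c1_01 Dv).
have t2 := Err_le_tangent al2_gt0 be2_gt0 s2_ge1
  (lin_unit_coeffs_bounds c2_01 Da1) (lin_unit_coeffs_bounds c2_01 Dv).
have := ler_wpM2l w1_ge0 t1; have := ler_wpM2l w2_ge0 t2.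
have lin_c : lin c (vert G k) - lin c a1 =
    - (w1 * D1 * (lin c1 (vert G k) - x1)) - w2 * D2 * (lin c2 (vert G k) - x2).
  by rewrite /x1 /x2 /c /lin /=; ring.
rewrite /Eobj !q1E !q2E -/c1 -/c2 -/x1 -/x2 -/D1 -/D2; lra.
Qed.

End Objective.

Lemma Eobj_swap (R : realType) (al1 be1 al2 be2 w1 w2 p11 p22 p112 p221 : R) a1 a2 :
  Eobj al1 be1 al2 be2 w1 w2 p11 p22 p112 p221 a1 a2
  = Eobj al1 be1 al2 be2 w1 w2 p22 p11 p221 p112 a2 a1.
Proof. by rewrite /Eobj /qeff /=; congr (_ * Err _ _ _ + _ * Err _ _ _); ring. Qed.

Theorem theorem1 (R : realType)
  (al1 be1 al2 be2 w1 w2 G1 G2 p11 p22 p112 p221 : R) :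
  0 < al1 < 1 -> 0 < be1 < 1 -> 0 < al2 < 1 -> 0 < be2 < 1 ->
  1 - al1 - be1 <= 0 -> 1 - al2 - be2 <= 0 ->
  0 <= w1 -> 0 <= w2 ->
  0 < G1 <= 1 -> 0 < G2 <= 1 ->
  0 <= p11 <= 1 -> 0 <= p22 <= 1 -> 0 <= p112 <= 1 -> 0 <= p221 <= 1 ->
  exists v1 v2 : policy R,
    vertex G1 v1 /\ vertex G2 v2 /\
    forall a1 a2 : policy R, feasible G1 a1 -> feasible G2 a2 ->
      Eobj al1 be1 al2 be2 w1 w2 p11 p22 p112 p221 v1 v2
      <= Eobj al1 be1 al2 be2 w1 w2 p11 p22 p112 p221 a1 a2.
Proof.
move=> /andP[al1_gt0 _] /andP[be1_gt0 _] /andP[al2_gt0 _] /andP[be2_gt0 _].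
move=> lam1_le0 lam2_le0 w1_ge0 w2_ge0 G1_01 G2_01 p11_01 p22_01 p112_01 p221_01.
have s1_ge1 : 1 <= al1 + be1 by lra.
have s2_ge1 : 1 <= al2 + be2 by lra.
set E := Eobj al1 be1 al2 be2 w1 w2 p11 p22 p112 p221.
have vert_pair_le a1 a2 : feasible G1 a1 -> feasible G2 a2 ->
    exists k1 k2, E (vert G1 k1) (vert G2 k2) <= E a1 a2.
  move=> F1 F2.
  have [k1 le1] := Eobj_vert_le_l al1_gt0 be1_gt0 s1_ge1 al2_gt0 be2_gt0 s2_ge1
    w1_ge0 w2_ge0 p11_01 p22_01 p112_01 p221_01 G1 a1 a2 G1_01 F1
    (feasible_distribution F2).
  have Dv1 : distribution (vert G1 k1).
    by apply: vert_distribution; case/andP: G1_01 => /ltW -> ->.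
  have [k2 le2] := Eobj_vert_le_l al1_gt0 be1_gt0 s1_ge1 al2_gt0 be2_gt0 s2_ge1
    w1_ge0 w2_ge0 p22_01 p11_01 p221_01 p112_01 G2 a2 (vert G1 k1) G2_01 F2 Dv1.
  exists k1, k2; apply: le_trans le1.
  by rewrite /E Eobj_swap [X in _ <= X]Eobj_swap.
pose k := [arg min_(k < (ord0, ord0)) E (vert G1 k.1) (vert G2 k.2)]%O.
exists (vert G1 k.1), (vert G2 k.2).
split; [exact: vert_vertex | split; first exact: vert_vertex].
move=> a1 a2 F1 F2; have [k1 [k2 le_a]] := vert_pair_le a1 a2 F1 F2.
apply: le_trans le_a; rewrite /k; case: arg_minP => // i _ i_min.
exact: (i_min (k1, k2)).
Qed.
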